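(* Let $\Delta\ge 3$ be an integer and let $c_1,\dots,c_\Delta$ be defined by $c_\Delta=\frac{1}{\Delta}$ and $ic_i+c_{i+1}=1$ for $i=1,\dots,\Delta-1$. Let $\varepsilon>0$ and $j\in\{1,\dots,\Delta\}$. Then there are infinitely many graphs $G\in\mathcal{G}_\Delta$ for which the inequality $$\alpha(G)\ge \varepsilon|V_j(G)|+\sum_{i=1}^{\Delta} c_i|V_i(G)|$$ does not hold.
   Context: All graphs are simple, finite and undirected. For an integer $\Delta\ge 3$, $\mathcal{G}_\Delta$ denotes the set of connected graphs $G\neq K_{\Delta+1}$ with maximum degree $\Delta$. For a graph $G$ and $i\ge 1$, $V_i(G)$ is the set of vertices of $G$ of degree $i$. $\alpha(G)$ is the independence number of $G$. *)

From HB Require Import structures.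
From mathcomp Require Import all_boot all_order all_algebra.
From mathcomp Require Import reals.
Set Implicit Arguments. Unset Strict Implicit. Unset Printing Implicit Defensive.

Definition simple_graph (n : nat) (e : rel 'I_n) : bool :=
  [forall x, ~~ e x x] && [forall x, forall y, e x y == e y x].

Definition deg (n : nat) (e : rel 'I_n) (x : 'I_n) : nat := #|[set y | e x y]|.

Definition maxdeg (n : nat) (e : rel 'I_n) : nat := \max_(x : 'I_n) deg e x.

Definition connected_graph (n : nat) (e : rel 'I_n) : bool :=
  (0 < n) && [forall x, forall y, connect e x y].

Definition is_complete (m n : nat) (e : rel 'I_n) : bool :=
  (n == m) && [forall x, forall y, (x != y) ==> e x y].

Definition Vdeg (n : nat) (e : rel 'I_n) (i : nat) : {set 'I_n} :=
  [set x | deg e x == i].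

Definition independent (n : nat) (e : rel 'I_n) (A : {set 'I_n}) : bool :=
  [forall x in A, forall y in A, ~~ e x y].

Definition alpha (n : nat) (e : rel 'I_n) : nat :=
  \max_(A : {set 'I_n} | independent e A) #|A|.

Definition in_GDelta (Delta n : nat) (e : rel 'I_n) : bool :=
  [&& simple_graph e, connected_graph e, maxdeg e == Delta
    & ~~ is_complete Delta.+1 e].

From HB Require Import structures.
From mathcomp Require Import all_boot all_order all_algebra.
From mathcomp Require Import reals.
From mathcomp Require Import zify ring lra.
Set Implicit Arguments. Unset Strict Implicit. Unset Printing Implicit Defensive.
Import Order.TTheory GRing.Theory Num.Theory.

(* Chain m > N copies of K_Delta into a path by single edges, and attach a
   clique K_(k+1), k = min(j, Delta - 1), by one edge at a vertex of the first
   copy that has no other outside neighbour. Every vertex of a copy of K_Delta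
   then has degree Delta - 1 or Delta, and c_(Delta-1) = c_Delta = 1/Delta, so
   each copy contributes exactly 1 to sum_i c_i |V_i|; the pendant clique has k
   vertices of degree k and one of degree k + 1, contributing
   k c_k + c_(k+1) = 1. The weighted sum is therefore the number m + 1 of
   cliques, which bounds alpha from above, while V_j is nonempty, so the
   eps |V_j| term breaks the inequality. *)

Section Relabelling.
Variable T : finType.
Implicit Types (e : rel T) (z : T).

Definition degree e z : nat := #|[set w | e z w]|.

Definition rel_ord e : rel 'I_#|T| := relpre enum_val e.

Lemma card_enum_val_preim (P : pred T) :
  #|[set x : 'I_#|T| | P (enum_val x)]| = #|[set z | P z]|.
Proof.
rewrite -[RHS](card_imset _ enum_rank_inj); apply: eq_card => x.
apply/idP/imsetP => [|[z]]; rewrite !inE.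
- by move=> Px; exists (enum_val x); rewrite ?inE ?enum_valK.
- by move=> Pz ->; rewrite enum_rankK.
Qed.

Lemma deg_rel_ord e x : deg (rel_ord e) x = degree e (enum_val x).
Proof. exact: card_enum_val_preim. Qed.

Lemma card_Vdeg_rel_ord e i :
  #|Vdeg (rel_ord e) i| = #|[set z | degree e z == i]|.
Proof.
rewrite -(card_enum_val_preim (fun z => degree e z == i)); apply: eq_card => x.
by rewrite !inE deg_rel_ord.
Qed.

Lemma connect_rel_ord e x y :
  connect e (enum_val x) (enum_val y) -> connect (rel_ord e) x y.
Proof.
case/connectP=> p e_p y_last; apply/connectP; exists (map enum_rank p).
  by rewrite -path_map (mapK enum_rankK).
by rewrite -[x]enum_valK last_map -y_last enum_valK.
Qed.

Lemma alpha_rel_ord_le e (K : finType) (f : T -> K) :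
  (forall z w, z != w -> f z = f w -> e z w) -> (alpha (rel_ord e) <= #|K|)%N.
Proof.
move=> f_cliques; apply/bigmax_leqP => A /forall_inP A_indep.
suff f_inj : {in A &, injective (f \o enum_val)}.
  by rewrite -(card_in_imset f_inj) max_card.
move=> x y xA yA /= fxy; apply: contraTeq (forall_inP (A_indep x xA) y yA).
by move=> neq_xy; rewrite negbK /rel_ord /= f_cliques // (inj_eq enum_val_inj).
Qed.

Lemma in_GDelta_rel_ord e Delta z0 :
  irreflexive e -> symmetric e -> (forall z w, connect e z w) ->
  (forall z, degree e z <= Delta)%N -> degree e z0 = Delta ->
  #|T| != Delta.+1 -> in_GDelta Delta (rel_ord e).
Proof.
move=> e_irr e_sym e_conn deg_le deg_z0 card_T.
apply/and4P; split.
- apply/andP; split; apply/forallP => x; first by rewrite /rel_ord /= e_irr.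
  by apply/forallP => y; rewrite /rel_ord /= e_sym.
- apply/andP; split; first by apply/card_gt0P; exists z0.
  by apply/'forall_forallP => x y; apply/connect_rel_ord/e_conn.
- rewrite /maxdeg eqn_leq; apply/andP; split.
    by apply/bigmax_leqP => x _; rewrite deg_rel_ord.
  by apply: leq_trans (leq_bigmax (enum_rank z0)); rewrite deg_rel_ord enum_rankK deg_z0.
- by rewrite /is_complete negb_and card_T.
Qed.

End Relabelling.

Section CliqueChain.
Variables m D s : nat.
Hypothesis D_gt2 : (2 < D)%N.

Local Notation vertex := ('I_m * 'I_D + 'I_s)%type.

(* [inl (b, p)] is vertex p of the b-th copy of K_D, [inr q] vertex q of the
   pendant K_s. Copy b is linked to copy b + 1 by the edge (b, D-1) -- (b+1, 0),
   and the pendant clique by the edge (0, 1) -- q = 0; for D >= 3 the link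
   endpoints 0, 1, D - 1 are distinct. *)

Definition chain_adj : rel vertex := fun x y =>
  match x, y with
  | inl (b, p), inl (b', p') =>
      [|| (b == b') && (p != p'),
          [&& b'.+1 == b :> nat, p == 0 :> nat & p'.+1 == D]
        | [&& b.+1 == b' :> nat, p.+1 == D & p' == 0 :> nat]]
  | inl (b, p), inr q | inr q, inl (b, p) =>
      [&& b == 0 :> nat, p == 1 :> nat & q == 0 :> nat]
  | inr q, inr q' => q != q'
  end.

Lemma chain_adj_sym : symmetric chain_adj.
Proof.
case=> [[b p]|q] [[b' p']|q'] //=; last by rewrite eq_sym.
by rewrite eq_sym (eq_sym p); case: (b == b'); case: (p == p'); rewrite /= ?orbF; lia.
Qed.

Lemma chain_adj_irr : irreflexive chain_adj.
Proof. by case=> [[b p]|q] /=; rewrite ?eqxx //=; lia. Qed.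

Definition block (b : 'I_m) : {set vertex} :=
  [set z | if z is inl (b', _) then b' == b else false].

Lemma block_neighbours (b : 'I_m) (p : 'I_D) :
  [set w | chain_adj (inl (b, p)) w] :&: block b = [set inl (b, p') | p' in [set~ p]].
Proof.
apply/setP => -[[b' p']|q]; rewrite !inE /=; last first.
  by rewrite andbF; apply/esym/negbTE/imsetP; case.
apply/idP/imsetP => [/andP[adj /eqP eq_b]|[p'' + [-> ->]]]; rewrite ?inE.
- subst b'; exists p' => //; rewrite !inE eq_sym.
  by move: adj; rewrite eqxx /=; case/orP => [//|]; lia.
- by rewrite eqxx eq_sym => ->.
Qed.

Lemma degree_block_vertex (b : 'I_m) (p : 'I_D) :
  degree chain_adj (inl (b, p)) =
  (D.-1 + #|[set w | chain_adj (inl (b, p)) w] :\: block b|)%N.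
Proof.
rewrite /degree -(cardsID (block b)) block_neighbours.
by rewrite card_imset ?cardsC1 ?card_ord // => p1 p2 [].
Qed.

Lemma card_link_neighbours_le1 (b : 'I_m) (p : 'I_D) :
  (#|[set w | chain_adj (inl (b, p)) w] :\: block b| <= 1)%N.
Proof.
apply/card_le1_eqP => -[[b1 p1]|q1] [[b2 p2]|q2]; rewrite !inE /=.
- rewrite ![b == _]eq_sym => /andP[ne1 adj1] /andP[ne2 adj2].
  move: adj1 adj2; rewrite (negbTE ne1) (negbTE ne2) /= => adj1 adj2.
  have eq_b : b2 = b1 by apply: ord_inj; lia.
  have eq_p : p2 = p1 by apply: ord_inj; lia.
  by rewrite eq_b eq_p.
- move=> /andP[ne1 adj1] to_pendant; move: adj1.
  by rewrite [b == _]eq_sym (negbTE ne1) /=; lia.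
- move=> to_pendant /andP[ne2 adj2]; move: adj2.
  by rewrite [b == _]eq_sym (negbTE ne2) /=; lia.
- by move=> adj1 adj2; congr inr; apply: ord_inj; lia.
Qed.

Lemma degree_block_vertex_bounds (b : 'I_m) (p : 'I_D) :
  (D.-1 <= degree chain_adj (inl (b, p)) <= D)%N.
Proof.
have := card_link_neighbours_le1 b p; rewrite degree_block_vertex; lia.
Qed.

Hypothesis m_gt0 : (0 < m)%N.
Hypothesis s_gt1 : (1 < s)%N.
Let D_gt1 : (1 < D)%N := ltnW D_gt2.
Let s_gt0 : (0 < s)%N := ltnW s_gt1.

Definition hub : vertex := inl (Ordinal m_gt0, Ordinal D_gt1).

Lemma degree_hub : degree chain_adj hub = D.
Proof.
rewrite /hub degree_block_vertex.
have := card_link_neighbours_le1 (Ordinal m_gt0) (Ordinal D_gt1).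
set link := _ :\: _; suff : (0 < #|link|)%N by lia.
by apply/card_gt0P; exists (inr (Ordinal s_gt0)); rewrite !inE.
Qed.

Definition pendant : {set vertex} := [set z | if z is inr _ then true else false].

Lemma pendant_neighbours (q : 'I_s) :
  [set w | chain_adj (inr q) w] :&: pendant = [set inr q' | q' in [set~ q]].
Proof.
apply/setP => -[[b' p']|q']; rewrite !inE /=.
  by rewrite andbF; apply/esym/negbTE/imsetP; case.
rewrite andbT eq_sym; apply/idP/imsetP => [ne|[q'' + [->]]].
- by exists q'; rewrite ?inE.
- by rewrite in_setC1.
Qed.

Lemma degree_pendant_vertex (q : 'I_s) :
  degree chain_adj (inr q) = (s.-1 + (q == 0 :> nat))%N.
Proof.
rewrite /degree -(cardsID pendant) pendant_neighbours.
rewrite card_imset ?cardsC1 ?card_ord; last by move=> q1 q2 [].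
congr addn.
have [q0 | q_neq0] /= := eqVneq (q : nat) 0%N; apply/eqP; last first.
  rewrite cards_eq0; apply/eqP/setP => -[[b p]|q']; rewrite !inE //=.
  by rewrite (negbTE q_neq0) !andbF.
rewrite eqn_leq; apply/andP; split.
- apply/card_le1_eqP => -[[b1 p1]|q1] [[b2 p2]|q2]; rewrite !inE //=.
  by move=> adj1 adj2; congr (inl (_, _)); apply: ord_inj; lia.
- by apply/card_gt0P; exists hub; rewrite !inE /= q0.
Qed.

Lemma connect_block (b : 'I_m) (p p' : 'I_D) :
  connect chain_adj (inl (b, p)) (inl (b, p')).
Proof.
have [-> | ne] := eqVneq p p'; first exact: connect0.
by apply: connect1; rewrite /= eqxx ne.
Qed.

Lemma connect_to_hub z : connect chain_adj z hub.
Proof.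
have D_gt0 : (0 < D)%N by lia.
have last_lt : (D.-1 < D)%N by lia.
have block_to_hub k (b : 'I_m) p : b = k :> nat -> connect chain_adj (inl (b, p)) hub.
  elim: k b p => [|k IHk] b p b_k.
    have -> : b = Ordinal m_gt0 by apply: ord_inj.
    exact: connect_block.
  have k_lt : (k < m)%N by have := ltn_ord b; lia.
  apply: connect_trans (connect_block b p (Ordinal D_gt0)) _.
  apply: connect_trans (IHk (Ordinal k_lt) (Ordinal last_lt) erefl).
  by apply: connect1; rewrite /= b_k; lia.
case: z => [[b p]|q]; first exact: block_to_hub.
have pendant_root_hub : connect chain_adj (inr (Ordinal s_gt0)) hub by apply: connect1.
have [-> // | ne] := eqVneq q (Ordinal s_gt0).
by apply: connect_trans pendant_root_hub; apply: connect1; rewrite /= ne.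
Qed.

Definition clique_of (z : vertex) : option 'I_m :=
  if z is inl (b, _) then Some b else None.

Lemma clique_of_adj (x y : vertex) : x != y -> clique_of x = clique_of y -> chain_adj x y.
Proof.
case: x y => [[b p]|q] [[b' p']|q'] //= ne [eq_b]; subst b'.
by rewrite eqxx /=; apply/orP; left; apply: contra ne => /eqP ->.
Qed.

Lemma alpha_chain_le : (alpha (rel_ord chain_adj) <= m.+1)%N.
Proof. by have := alpha_rel_ord_le clique_of_adj; rewrite card_option card_ord. Qed.

Lemma degree_chain_range z : (s <= D)%N -> (1 <= degree chain_adj z <= D)%N.
Proof.
move=> s_le_D; case: z => [[b p]|q].
  case/andP: (degree_block_vertex_bounds b p) => lo ->.
  by rewrite andbT; apply: leq_trans lo; lia.
by rewrite degree_pendant_vertex; have := ltn_ord q; case: eqP => /=; lia.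
Qed.

Lemma chain_in_GDelta : (s <= D)%N -> in_GDelta D (rel_ord chain_adj).
Proof.
move=> s_le_D; apply: (@in_GDelta_rel_ord _ _ _ hub).
- exact: chain_adj_irr.
- exact: chain_adj_sym.
- move=> z w; apply: connect_trans (connect_to_hub z) _.
  by rewrite sym_connect_sym ?connect_to_hub //; apply: chain_adj_sym.
- by move=> z; case/andP: (degree_chain_range z s_le_D).
- exact: degree_hub.
- by rewrite card_sum card_prod !card_ord; nia.
Qed.

End CliqueChain.

Local Open Scope ring_scope.

Lemma sum_card_fibers (R : pzSemiRingType) (T : finType) (f : T -> nat) (c : nat -> R)
    (lo hi : nat) :
  (forall z, lo <= f z < hi)%N ->
  \sum_(lo <= i < hi) c i * #|[set z | f z == i]|%:R = \sum_(z : T) c (f z).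
Proof.
move=> f_range.
transitivity (\sum_(lo <= i < hi) \sum_(z | f z == i) c i).
  apply: eq_bigr => i _; rewrite sumr_const mulr_natr; congr (_ *+ _).
  by apply: eq_card => z; rewrite inE.
rewrite (exchange_big_dep xpredT) //=; apply: eq_bigr => z _.
rewrite -big_filter (@eq_filter _ _ (pred1 (f z))) => [|i]; last by rewrite /= eq_sym.
by rewrite filter_pred1_uniq ?big_seq1 ?iota_uniq // mem_index_iota f_range.
Qed.

Lemma pred_weight_eq_top (R : numFieldType) (D : nat) (c : nat -> R) :
  (1 < D)%N -> c D = D%:R^-1 -> D.-1%:R * c D.-1 + c D = 1 -> c D.-1 = D%:R^-1.
Proof.
case: D => [|d] //= d_gt0 ->; rewrite -natr1 => rec.
have d_neq0 : d%:R != 0 :> R by rewrite pnatr_eq0 -lt0n.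
have d1_neq0 : d%:R + 1 != 0 :> R by rewrite natr1 pnatr_eq0.
apply: (mulfI d_neq0); rewrite -[d%:R * _](addrK (d%:R + 1)^-1) rec.
by field.
Qed.

Lemma sum_chain_weights (R : numFieldType) (m D s : nat) (c : nat -> R) :
  (2 < D)%N -> (0 < m)%N -> (1 < s)%N ->
  c D.-1 = D%:R^-1 -> c D = D%:R^-1 -> s.-1%:R * c s.-1 + c s = 1 ->
  \sum_z c (degree (@chain_adj m D s) z) = m.+1%:R.
Proof.
move=> D_gt2 m_gt0 s_gt1 c_pred c_top c_s; rewrite big_sumType /=.
have -> : \sum_(x : 'I_m * 'I_D) c (degree (@chain_adj m D s) (inl x)) = m%:R.
  transitivity (\sum_(x : 'I_m * 'I_D) D%:R^-1 : R).
    apply: eq_bigr => -[b p] _.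
    have := degree_block_vertex_bounds s D_gt2 b p.
    set k := degree _ _ => k_bounds.
    by have [->|->] : k = D.-1 \/ k = D by lia.
  have D_neq0 : D%:R != 0 :> R by rewrite pnatr_eq0; lia.
  by rewrite sumr_const card_prod !card_ord mulnC mulrnA -[_ *+ D]mulr_natr mulVf.
rewrite -addn1 natrD; congr (_ + _).
case: s s_gt1 c_s => // s' s_gt1 /= <-.
rewrite big_ord_recl (degree_pendant_vertex D_gt2 m_gt0 s_gt1) /= addn1.
under eq_bigr => i _ do rewrite (degree_pendant_vertex D_gt2 m_gt0 s_gt1) addn0.
by rewrite sumr_const card_ord mulr_natl addrC.
Qed.

Theorem theorem3 (R : realType) (Delta : nat) (c : nat -> R) (eps : R) (j : nat) :
  (3 <= Delta)%N ->
  c Delta = (Delta%:R)^-1 ->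
  (forall i : nat, (1 <= i <= Delta.-1)%N -> i%:R * c i + c i.+1 = 1) ->
  0 < eps ->
  (1 <= j <= Delta)%N ->
  forall N : nat, exists (n : nat) (e : rel 'I_n),
    [/\ (N <= n)%N, in_GDelta Delta e &
      ~ (eps * (#|Vdeg e j|)%:R + \sum_(1 <= i < Delta.+1) c i * (#|Vdeg e i|)%:R
          <= (alpha e)%:R)].
Proof.
move=> D_gt2 c_top c_rec eps_gt0 j_range N.
pose k := minn j Delta.-1.
have k_range : (1 <= k <= Delta.-1)%N by lia.
have m_gt0 : (0 < N.+1)%N by [].
have s_gt1 : (1 < k.+1)%N by lia.
have s_le_D : (k.+1 <= Delta)%N by lia.
pose G := @chain_adj N.+1 Delta k.+1.
exists #|{: 'I_N.+1 * 'I_Delta + 'I_k.+1}|, (rel_ord G); split.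
- by rewrite card_sum card_prod !card_ord; nia.
- exact: chain_in_GDelta.
have weight_sum : \sum_(1 <= i < Delta.+1) c i * #|Vdeg (rel_ord G) i|%:R = N.+2%:R.
  under eq_bigr do rewrite card_Vdeg_rel_ord.
  rewrite sum_card_fibers => [|z]; last exact: degree_chain_range.
  apply: sum_chain_weights => //; last exact: c_rec.
  apply: pred_weight_eq_top => //; first lia.
  by have := c_rec Delta.-1; rewrite prednK; [apply; lia | lia].
have Vj_gt0 : (0 < #|Vdeg (rel_ord G) j|)%N.
  rewrite card_Vdeg_rel_ord; apply/card_gt0P.
  have [j_lt_D | j_ge_D] := ltnP j Delta.
    by exists (inr (Ordinal s_gt1)); rewrite inE degree_pendant_vertex //=; apply/eqP; lia.
  by exists (hub k.+1 D_gt2 m_gt0); rewrite inE degree_hub //; apply/eqP; lia.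
have alpha_le : (alpha (rel_ord G))%:R <= N.+2%:R :> R by rewrite ler_nat alpha_chain_le.
have eps_term_gt0 : 0 < eps * #|Vdeg (rel_ord G) j|%:R by rewrite mulr_gt0 ?ltr0n.
by rewrite weight_sum; lra.
Qed.
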